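(* There exists an absolute constant $C>0$ such that for any integers $m\ge2$ and $M\ge m$, $$\sum_{0\le j_1<j_2<\dots<j_m<M}\ \prod_{k=1}^{m-1}\frac{j_{k+1}-j_k}{j_k+1}\le \log(M+1)\left(\frac{CM}{m^2}\right)^m,$$ where the sum is over all integer vectors $(j_1,\dots,j_m)$ with $0\le j_1<\dots<j_m<M$. *)

From mathcomp Require Import all_boot all_order all_algebra.
From mathcomp Require Import all_classical all_reals all_analysis.
From mathcomp Require Import Rstruct Rstruct_topology.
Set Implicit Arguments. Unset Strict Implicit. Unset Printing Implicit Defensive.
Import Order.TTheory GRing.Theory Num.Theory.
Local Open Scope ring_scope.

(* The summand for an increasing vector j = (j_1,...,j_m) (0-indexed here):
   prod_{k=1}^{m-1} (j_{k+1} - j_k) / (j_k + 1). *)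
Definition corr_term (m : nat) (j : nat -> nat) : Rdefinitions.R :=
  \prod_(k < m.-1) (((j k.+1 - j k)%N)%:R / ((j k).+1)%:R).

Definition corr_sum (m M : nat) : Rdefinitions.R :=
  \sum_(t : m.-tuple 'I_M | sorted ltn (map val t))
     corr_term m (fun k => nth 0%N (map val t) k).

From mathcomp Require Import all_boot all_order all_algebra.
From mathcomp Require Import all_classical all_reals all_analysis.
From mathcomp Require Import Rstruct Rstruct_topology.
From mathcomp Require Import ring lra.
Import Order.TTheory GRing.Theory Num.Theory.
Local Open Scope ring_scope.

(* Grouping the vectors by their last entry z gives the recursion
   c_{k+1}(z) = sum_{y<z} (z-y)/(y+1) c_k(y).  At the first step the weights
   (z-y)/(y+1) are bounded by (z+1) H_M, H_M the harmonic number; at every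
   later step the factor 1/(y+1) cancels the factor y+1 of the previous bound,
   and the remaining sum of (z-y) C(y+k,k) is a hockey-stick identity.  This
   gives corr_sum m M <= H_M M C(M+m-2, m-1)/(m-1)! <= H_M (2M)^m / (2 (m-1)!^2),
   and we conclude with H_M <= 2 log(M+1) and m^m <= 4^m m! (from e <= 4). *)

Section TupleSums.
Context {R : nmodType} {T : finType}.

Lemma sum_tuple0 (F : seq T -> R) : \sum_(t : 0.-tuple T) F t = F [::].
Proof.
rewrite (big_pred1 [tuple]) //= => t; rewrite [t]tuple0; exact: esym (eqxx _).
Qed.

Lemma sum_tupleS n (F : seq T -> R) :
  \sum_(t : n.+1.-tuple T) F t = \sum_(x : T) \sum_(t : n.-tuple T) F (x :: t).
Proof.
rewrite pair_big /=.
pose cons_tuple (p : T * n.-tuple T) := [tuple of p.1 :: p.2].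
pose uncons_tuple (t : n.+1.-tuple T) := (thead t, [tuple of behead t]).
have consK : cancel cons_tuple uncons_tuple.
  by case=> x t; congr (_, _); apply: val_inj.
have unconsK : cancel uncons_tuple cons_tuple.
  by move=> t; apply: val_inj; rewrite /= [in RHS](tuple_eta t).
by rewrite (reindex cons_tuple) //; exists uncons_tuple.
Qed.

Lemma sum_tuple_rcons n (F : seq T -> R) :
  \sum_(t : n.+1.-tuple T) F t = \sum_(t : n.-tuple T) \sum_(y : T) F (rcons t y).
Proof.
elim: n F => [|n IHn] F.
  rewrite sum_tupleS (sum_tuple0 (fun s => \sum_y F (rcons s y))).
  by apply: eq_bigr => x _; rewrite (sum_tuple0 (fun s => F (x :: s))).
rewrite sum_tupleS (sum_tupleS _ (fun s => \sum_y F (rcons s y))).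
by apply: eq_bigr => x _; rewrite (IHn (fun s => F (x :: s))).
Qed.

End TupleSums.

Lemma sorted_rcons2 (T : Type) (e : rel T) (s : seq T) a b :
  sorted e (rcons (rcons s a) b) = sorted e (rcons s a) && e a b.
Proof. by case: s => [|x s] /=; rewrite ?rcons_path ?last_rcons ?andbT. Qed.

Lemma corr_term_rcons (s : seq nat) a b :
  corr_term (size s).+2 (nth 0%N (rcons (rcons s a) b)) =
  corr_term (size s).+1 (nth 0%N (rcons s a)) * ((b - a)%N%:R / a.+1%:R).
Proof.
rewrite /corr_term big_ord_recr /=; congr (_ * _).
  apply: eq_bigr => i _ /=.
  by rewrite !nth_rcons !size_rcons !ltnS ltn_ord (ltnW (ltn_ord i)).
by rewrite !nth_rcons !size_rcons ltnSn !ltnn !eqxx.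
Qed.

Fixpoint corr_chain (k z : nat) : Rdefinitions.R :=
  if k is k'.+1 then \sum_(y < z) ((z - y)%N%:R / y.+1%:R * corr_chain k' y)
  else 1.

Lemma corr_chainE M k z : (z <= M)%N ->
  \sum_(t : k.-tuple 'I_M | sorted ltn (rcons (map val t) z))
     corr_term k.+1 (nth 0%N (rcons (map val t) z)) = corr_chain k z.
Proof.
elim: k z => [|k IHk] z zM; rewrite big_mkcond /=.
  by rewrite (sum_tuple0 (fun s : seq 'I_M => if sorted ltn (rcons (map val s) z)
     then corr_term 1 (nth 0%N (rcons (map val s) z)) else 0)) /= /corr_term big_ord0.
rewrite (sum_tuple_rcons _ (fun s : seq 'I_M => if sorted ltn (rcons (map val s) z)
     then corr_term k.+2 (nth 0%N (rcons (map val s) z)) else 0)) /=.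
under eq_bigr => t _.
  under eq_bigr => y _.
    rewrite map_rcons sorted_rcons2.
    have -> : k.+2 = (size (map val t)).+2 by rewrite size_map size_tuple.
    rewrite corr_term_rcons size_map size_tuple.
    over.
  over.
rewrite /= exchange_big /= (big_ord_widen M (fun y => (z - y)%N%:R / y.+1%:R * corr_chain k y) zM).
rewrite [RHS]big_mkcond /=; apply: eq_bigr => y _.
case: ifP => yz; last by apply: big1 => t _; rewrite andbF.
rewrite -(IHk y (ltnW (leq_trans yz zM))) big_distrr [RHS]big_mkcond /=.
by apply: eq_bigr => t _; rewrite andbT; case: ifP => // _; rewrite mulrC.
Qed.

Lemma corr_sumE M k : corr_sum k.+1 M = \sum_(z < M) corr_chain k z.
Proof.
rewrite /corr_sum big_mkcond /=.
rewrite (sum_tuple_rcons _ (fun s : seq 'I_M => if sorted ltn (map val s)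
   then corr_term k.+1 (nth 0%N (map val s)) else 0)) /= exchange_big /=.
apply: eq_bigr => z _; rewrite -(corr_chainE _ k _ (ltnW (ltn_ord z))) [RHS]big_mkcond /=.
by apply: eq_bigr => t _; rewrite map_rcons.
Qed.

Lemma hockey_stick k z : (\sum_(y < z) 'C(y + k, k))%N = 'C(z + k, k.+1).
Proof.
elim: z => [|z IHz]; first by rewrite big_ord0 bin_small.
by rewrite big_ord_recr /= IHz addSn binS.
Qed.

Lemma hockey_stick_weighted k z :
  (\sum_(y < z) (z - y) * 'C(y + k, k))%N = 'C(z + k.+1, k.+2).
Proof.
elim: z => [|z IHz]; first by rewrite big_ord0 bin_small.
rewrite big_ord_recr /= subSnn mul1n.
under eq_bigr => y _ do rewrite subSn ?(ltnW (ltn_ord y)) // mulSn addnC.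
by rewrite big_split /= IHz hockey_stick addSn binS addnS binS addnA.
Qed.

Lemma ffact_le_expn n m : (n ^_ m <= n ^ m)%N.
Proof.
rewrite ffact_prod -[m in (n ^ m)%N]card_ord -prod_nat_const.
by apply: leq_prod => i _; rewrite leq_subr.
Qed.

Lemma expR1_le4 (R : realType) : expR (1 : R) <= 4.
Proof.
have half_ge : 2^-1 <= expR (- 2^-1 : R) by have := expR_ge1Dx (- 2^-1 : R); lra.
have half_le : expR (2^-1 : R) <= 2.
  have := expRxMexpNx_1 (2^-1 : R); have := expR_gt0 (2^-1 : R); nra.
have -> : (1 : R) = 2^-1 + 2^-1 by field.
rewrite exp.expRD; have := expR_ge0 (2^-1 : R); nra.
Qed.

Lemma expn_le_fact n : (n ^ n <= 4 ^ n * n`!)%N.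
Proof.
case: n => [|n] //; set m := n.+1.
have fact_gt0 : 0 < m`!%:R :> Rdefinitions.R by rewrite ltr0n fact_gt0.
have : m%:R ^+ m / m`!%:R <= 4 ^+ m :> Rdefinitions.R.
  apply: (@le_trans _ _ (expR m%:R)).
    by have := @expR_ge1Dxn Rdefinitions.R _ n (ler0n _ m); lra.
  rewrite -[m%:R]mulr1 expRM_natl lerXn2r ?nnegrE ?expR_ge0 //; exact: expR1_le4.
by rewrite ler_pdivrMr // -natrX -natrX -natrM ler_nat.
Qed.

Lemma expn_sq_le_fact_sq k : (2 ^ k.+1 * (k.+1 ^ 2) ^ k.+1 <= 128 ^ k.+1 * k`! ^ 2)%N.
Proof.
set m := k.+1.
have sq_le : (m ^ 2 <= 4 ^ m)%N.
  by rewrite (_ : 4 = 2 ^ 2)%N // -expnM mulnC expnM leq_exp2r // ltnW // ltn_expl.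
have -> : (128 ^ m = 2 ^ m * (4 ^ m) ^ 2 * 4 ^ m)%N.
  by rewrite expnAC -!expnMn.
rewrite expnAC -!mulnA leq_pmul2l ?expn_gt0 //.
apply: leq_trans (_ : (4 ^ m * m`!) ^ 2 <= _)%N; first by rewrite leq_sqr expn_le_fact.
rewrite factS !expnMn expnS expn1 -!mulnA !leq_pmul2l ?expn_gt0 //.
by rewrite mulnA mulnn leq_mul2r sq_le orbT.
Qed.

Lemma invr_le_lnD1 (R : realType) (a : R) : 1 <= a -> a^-1 <= 2 * (ln (a + 1) - ln a).
Proof.
move=> a_ge1; have a_gt0 : 0 < a by lra.
have aD1_gt0 : 0 < a + 1 by lra.
have inv_lt1 : (a + 1)^-1 < 1 by rewrite invf_lt1 //; lra.
have := @le_ln1Dx _ (- (a + 1)^-1) ltac:(lra).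
have -> : 1 - (a + 1)^-1 = a / (a + 1) by field; lra.
rewrite ln_div ?posrE // => ln_le.
have : a^-1 <= 2 * (a + 1)^-1.
  rewrite -subr_ge0 (_ : _ - _ = (a - 1) / (a * (a + 1))); last by field; lra.
  by apply: divr_ge0; [lra | apply: mulr_ge0; lra].
lra.
Qed.

Lemma harmonic_le_ln (R : realType) M : series (@harmonic R) M <= 2 * ln M.+1%:R.
Proof.
rewrite /series /harmonic /=.
apply: (@le_trans _ _ (\sum_(0 <= y < M) 2 * (ln y.+2%:R - ln y.+1%:R))).
  by apply: ler_sum => y _; rewrite -[y.+2%:R]natr1 invr_le_lnD1 // ler1n.
by rewrite -big_distrr (telescope_sumr (fun y => ln y.+1%:R)) //= ln1 subr0.
Qed.

Lemma corr_chain_le M k z : (z <= M)%N ->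
  corr_chain k.+1 z <= series harmonic M * z.+1%:R * 'C(z + k, k)%:R / (k.+1)`!%:R.
Proof.
have harmonic_mono : {homo series (@harmonic Rdefinitions.R) : n m / (n <= m)%N >-> n <= m}.
  exact: nondecreasing_series (fun n _ _ => harmonic_ge0 n).
have H_ge0 : 0 <= series harmonic M :> Rdefinitions.R.
  by apply: sumr_ge0 => y _; exact: harmonic_ge0.
set H := series harmonic M in H_ge0 *.
elim: k z => [|k IHk] z zM.
  rewrite /= bin0 (_ : (1`!)%:R = 1) // divr1 mulr1.
  apply: (@le_trans _ _ (z.+1%:R * series harmonic z)).
    rewrite /series /harmonic /= big_mkord mulr_sumr; apply: ler_sum => y _.
    by rewrite mulr1 ler_wpM2r ?invr_ge0 // ler_nat leqW // leq_subr.
  by rewrite mulrC ler_wpM2r // harmonic_mono.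
set f : Rdefinitions.R := (k.+1)`!%:R.
have f_neq0 : f != 0 by rewrite pnatr_eq0 -lt0n fact_gt0.
apply: (@le_trans _ _ (\sum_(y < z) (z - y)%N%:R / y.+1%:R * (H * y.+1%:R * 'C(y + k, k)%:R / f))).
  apply: ler_sum => y _; rewrite ler_wpM2l ?divr_ge0 //.
  exact: IHk (ltnW (leq_trans (ltn_ord y) zM)).
rewrite (eq_bigr (fun y : 'I_z => H / f * ((z - y) * 'C(y + k, k))%N%:R));
  last by move=> y _; rewrite natrM; field; rewrite -/f f_neq0 addrC natr1 pnatr_eq0.
rewrite -mulr_sumr -natr_sum hockey_stick_weighted factS natrM -/f.
have bin_step : (k.+2 * 'C(z + k.+1, k.+2) <= z.+1 * 'C(z + k.+1, k.+1))%N.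
  by rewrite mul_bin_left addnK leq_mul2r leqnSn orbT.
have -> : H / f * 'C(z + k.+1, k.+2)%:R =
    H / (k.+2%:R * f) * (k.+2 * 'C(z + k.+1, k.+2))%N%:R.
  by rewrite natrM; field; rewrite f_neq0 -natrD pnatr_eq0.
have -> : H * z.+1%:R * 'C(z + k.+1, k.+1)%:R / (k.+2%:R * f) =
    H / (k.+2%:R * f) * (z.+1 * 'C(z + k.+1, k.+1))%N%:R.
  by rewrite natrM; ring.
by rewrite ler_wpM2l ?ler_nat // divr_ge0 // mulr_ge0.
Qed.

Lemma corr_sum_le M k :
  corr_sum k.+2 M <= series harmonic M * M%:R * 'C(M + k, k.+1)%:R / (k.+1)`!%:R.
Proof.
have H_ge0 : 0 <= series harmonic M :> Rdefinitions.R.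
  by apply: sumr_ge0 => y _; exact: harmonic_ge0.
rewrite corr_sumE.
apply: (@le_trans _ _ (\sum_(z < M) series harmonic M * M%:R / (k.+1)`!%:R * 'C(z + k, k)%:R)).
  apply: ler_sum => z _; apply: le_trans (corr_chain_le M k z (ltnW (ltn_ord z))) _.
  by rewrite [leRHS]mulrAC ler_wpM2r ?invr_ge0 ?ler0n // ler_wpM2r ?ler0n // ler_wpM2l // ler_nat.
by rewrite -mulr_sumr -natr_sum hockey_stick mulrAC.
Qed.

Lemma bin_fact_ratio_le (R : numFieldType) M k : (k <= M)%N ->
  2 * M%:R * 'C(M + k, k.+1)%:R / (k.+1)`!%:R <= (128 * M%:R / k.+2%:R ^+ 2) ^+ k.+2 :> R.
Proof.
move=> kM; set m := k.+2; set F := (k.+1)`!.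
have F_gt0 : (0 < F)%N by exact: fact_gt0.
have bin_le : ('C(M + k, k.+1) * F <= (2 * M) ^ k.+1)%N.
  by rewrite bin_ffact (leq_trans (ffact_le_expn _ _)) // leq_exp2r // mul2n -addnn leq_add2l.
have : (2 * M * 'C(M + k, k.+1) * (m ^ 2) ^ m <= 128 ^ m * M ^ m * F)%N.
  rewrite -(leq_pmul2r F_gt0).
  apply: (@leq_trans (M ^ m * (2 ^ m * (m ^ 2) ^ m))).
    rewrite (_ : M ^ m * _ = 2 * M * (2 * M) ^ k.+1 * (m ^ 2) ^ m)%N; last first.
      by rewrite expnMn !expnS; ring.
    by rewrite mulnAC leq_mul2r -mulnA leq_mul2l bin_le !orbT.
  rewrite [leqRHS](_ : _ = M ^ m * (128 ^ m * F ^ 2))%N; last by ring.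
  by rewrite leq_mul2l expn_sq_le_fact_sq orbT.
have m_gt0 : (0 < m)%N by [].
clearbody m F; rewrite -(ler_nat R) !natrM !natrX => nat_ineq.
rewrite expr_div_n exprMn ler_pdivlMr ?exprn_gt0 ?ltr0n // mulrAC.
by rewrite ler_pdivrMr ?ltr0n.
Qed.

Theorem corollary6p3 :
  exists C : Rdefinitions.R, 0 < C /\
    forall m M : nat, (2 <= m)%N -> (m <= M)%N ->
      corr_sum m M <= ln (M.+1%:R) * (C * M%:R / (m%:R ^+ 2)) ^+ m.
Proof.
exists 128; split => // -[|[|k]] M // _ leM.
set F : Rdefinitions.R := (k.+1)`!%:R.
have F_gt0 : 0 < F by rewrite ltr0n fact_gt0.
have ln_ge0 : 0 <= ln (M.+1%:R : Rdefinitions.R) by rewrite ln_ge0 // ler1n.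
apply: le_trans (corr_sum_le M k) _.
apply: (@le_trans _ _ (ln M.+1%:R * (2 * M%:R * 'C(M + k, k.+1)%:R / F))).
  rewrite [leRHS](_ : _ = 2 * ln M.+1%:R * M%:R * 'C(M + k, k.+1)%:R / F); last by ring.
  apply: ler_wpM2r; first by rewrite invr_ge0 ltW.
  by do 2 apply: ler_wpM2r => //; exact: harmonic_le_ln.
by rewrite ler_wpM2l // bin_fact_ratio_le // ltnW // ltnW.
Qed.
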